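(* Suppose $\mathcal R\subset\mathcal G$ has Property 2. Then the kernel of the seminorm $\|\cdot\|_{\mathcal R}$ on $U_{\mathrm{per}}$ is $U_{\mathrm{iso},0,0}\cap U_{\mathrm{per}}$.
   Context: Euclidean group: $\mathrm E(n)$ consists of pairs $(A|b)$, $A\in\mathrm O(n)$, $b\in\mathbb R^n$, acting by $(A|b)\cdot x=Ax+b$, product $(A_1|b_1)(A_2|b_2)=(A_1A_2|b_1+A_1b_2)$; $\mathrm{rot}(A|b)=A$. Standing setting: $d=d_1+d_2$; $\mathcal S<\mathrm E(d_2)$ is a space group with translation subgroup $\mathcal T_{\mathcal S}$; $A\oplus(B|b)=(\mathrm{diag}(A,B)|(0,b))$; $\mathcal G$ is a discrete subgroup of $\mathrm E(d)$ contained in $\{A\oplus s:A\in\mathrm O(d_1),s\in\mathcal S\}$ projecting onto $\mathcal S$; $\mathcal T\subset\mathcal G$ maps bijectively onto $\mathcal T_{\mathcal S}$. There is $m_0\in\mathbb N$ such that $\mathcal T^N=\{t^N:t\in\mathcal T\}$ is a normal subgroup iff $N\in\mathcal M=m_0\mathbb N$, then isomorphic to $\mathbb Z^{d_2}$ of finite index; $\mathcal C_N$ is a fixed set of representatives of $\mathcal G/\mathcal T^N$. $U_{\mathrm{per}}$: maps $u:\mathcal G\to\mathbb R^d$ that are $\mathcal T^N$-periodic ($u(gt)=u(g)$ for $t\in\mathcal T^N$) for some $N\in\mathcal M$. $x_0\in\mathbb R^d$ with $g\mapsto g\cdot x_0$ injective; $d_{\mathrm{aff}}=\dim\mathrm{aff}(\mathcal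 G\cdot x_0)$; assumed $\mathcal G\cdot x_0\subset\{0_{d-d_{\mathrm{aff}}}\}\times\mathbb R^{d_{\mathrm{aff}}}$ and $\mathcal G$ acts trivially on $\mathbb R^{d-d_{\mathrm{aff}}}\times\{0\}$. For $\mathcal R\subset\mathcal G$, $U_{\mathrm{iso}}(\mathcal R)$ is the set of $v:\mathcal R\to\mathbb R^d$ with $a\in\mathbb R^d$, $S\in\mathrm{Skew}(d)$ such that $\mathrm{rot}(g)v(g)=a+S(g\cdot x_0-x_0)$ for all $g\in\mathcal R$. For finite $\mathcal R$ and $\mathcal T^N$-periodic $u$: $\|u\|_{\mathcal R}=\big(\frac1{|\mathcal C_N|}\sum_{g\in\mathcal C_N}\mathrm{dist}(u(g\,\cdot)|_{\mathcal R},U_{\mathrm{iso}}(\mathcal R))^2\big)^{1/2}$ (Euclidean distance in $(\mathbb R^d)^{\mathcal R}$). $U_{\mathrm{iso},0,0}$ is the set of $u:\mathcal G\to\mathbb R^d$ with $a\in\mathbb R^d$, $S\in\mathrm{Skew}(d_1)$ such that $\mathrm{rot}(g)u(g)=a+(S\oplus0_{d_2\times d_2})(g\cdot x_0-x_0)$ for all $g\in\mathcal G$. Property 1: $\mathcal R$ finite, $\mathrm{id}\in\mathcal R$, $\mathrm{aff}(\mathcal R\cdot x_0)=\mathrm{aff}(\mathcal G\cdot x_0)$. Property 2: $\mathcal R$ finite, and there are $\mathcal R',\mathcal R''$ with $\mathrm{id}\in\mathcal R'$, $\mathcal R'$ generating $\mathcal G$, $\mathcal R''$ with Property 1, and $\{gh:g\in\mathcal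 R',h\in\mathcal R''\}\subset\mathcal R$. *)

From mathcomp Require Import all_boot all_order all_algebra.
From mathcomp Require Import boolp classical_sets reals.
Set Implicit Arguments. Unset Strict Implicit. Unset Printing Implicit Defensive.
Import Order.TTheory GRing.Theory Num.Theory.
Local Open Scope ring_scope.

Section Euclid.
Variable R : realType.

Definition Eucl (n : nat) := ('M[R]_n * 'cV[R]_n)%type.

Definition orthogonal n (A : 'M[R]_n) : Prop := A^T *m A = 1%:M.
Definition skew n (A : 'M[R]_n) : Prop := A^T = - A.

Definition isE n (g : Eucl n) : Prop := orthogonal g.1.
Definition eid n : Eucl n := (1%:M, 0).
Definition emul n (g h : Eucl n) : Eucl n := (g.1 *m h.1, g.2 + g.1 *m h.2).
Definition einv n (g : Eucl n) : Eucl n := (g.1^T, - (g.1^T *m g.2)).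
Definition act n (g : Eucl n) (x : 'cV[R]_n) : 'cV[R]_n := g.1 *m x + g.2.
Definition rot n (g : Eucl n) : 'M[R]_n := g.1.
Fixpoint epow n (g : Eucl n) (k : nat) : Eucl n :=
  if k is k'.+1 then emul (epow g k') g else eid n.

Definition sqnorm n (x : 'cV[R]_n) : R := \sum_(i < n) x i 0 ^+ 2.
Definition edist2 n (g h : Eucl n) : R :=
  \sum_(i < n) \sum_(j < n) (g.1 i j - h.1 i j) ^+ 2 + sqnorm (g.2 - h.2).

Definition subgroup n (H : set (Eucl n)) : Prop :=
  [/\ (forall g, H g -> isE g), H (eid n),
      (forall g h, H g -> H h -> H (emul g h)) & (forall g, H g -> H (einv g))].

Definition discrete n (H : set (Eucl n)) : Prop :=
  exists2 eps : R, 0 < eps & forall g, H g -> g <> eid n -> eps <= edist2 g (eid n).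

Definition normal_sub n (G H : set (Eucl n)) : Prop :=
  [/\ subgroup H, (forall h, H h -> G h) &
      forall g h, G g -> H h -> H (emul (emul g h) (einv g))].

Inductive gen n (X : set (Eucl n)) : Eucl n -> Prop :=
| gen_id : gen X (eid n)
| gen_in g : X g -> gen X g
| gen_mul g h : gen X g -> gen X h -> gen X (emul g h)
| gen_inv g : gen X g -> gen X (einv g).

Definition space_group n (S : set (Eucl n)) : Prop :=
  [/\ subgroup S, discrete S &
      exists V : 'M[R]_n, V \in unitmx /\
        forall b : 'cV[R]_n,
          S (1%:M, b) <-> exists z : 'cV[int]_n, b = V *m map_mx (fun k : int => k%:~R) z].

Definition dsum d1 d2 (A : 'M[R]_d1) (s : Eucl d2) : Eucl (d1 + d2) :=
  (block_mx A 0 0 s.1, col_mx 0 s.2).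
Definition eproj d1 d2 (g : Eucl (d1 + d2)) : Eucl d2 := (drsubmx g.1, dsubmx g.2).

Definition Tpow n (T : set (Eucl n)) (N : nat) : set (Eucl n) :=
  fun x => exists t, T t /\ x = epow t N.

Definition inM (m0 N : nat) : Prop := (0 < N)%N /\ (m0 %| N)%N.

Definition reps n (G H : set (Eucl n)) (c : seq (Eucl n)) : Prop :=
  [/\ uniq c, (forall x, x \in c -> G x) &
      forall g, G g -> exists x, [/\ x \in c, H (emul (einv x) g) &
                 forall y, y \in c -> H (emul (einv y) g) -> y = x]].

Definition aff n (X : set 'cV[R]_n) : set 'cV[R]_n :=
  fun y => exists (k : nat) (p : 'I_k -> 'cV[R]_n) (l : 'I_k -> R),
    [/\ forall i, X (p i), \sum_(i < k) l i = 1 & y = \sum_(i < k) l i *: p i].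

Definition affdim n (Y : set 'cV[R]_n) (k : nat) : Prop :=
  exists p : 'I_k.+1 -> 'cV[R]_n,
    [/\ forall i, Y (p i),
        row_free (\matrix_(i < k) (p (lift ord0 i) - p ord0)^T) &
        forall y, Y y -> aff (fun x => exists i, x = p i) y].

Definition orbit n (G : set (Eucl n)) (x0 : 'cV[R]_n) : set 'cV[R]_n :=
  fun y => exists g, G g /\ y = act g x0.

Definition seq_orbit n (Rr : seq (Eucl n)) (x0 : 'cV[R]_n) : set 'cV[R]_n :=
  fun y => exists g, g \in Rr /\ y = act g x0.

Definition standing_setting (d1 d2 : nat) (S : set (Eucl d2))
    (G T : set (Eucl (d1 + d2))) (m0 : nat) (C : nat -> seq (Eucl (d1 + d2)))
    (x0 : 'cV[R]_(d1 + d2)) (daff : nat) : Prop :=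
  [/\ [/\ space_group S, subgroup G & discrete G],
      (forall g, G g -> exists A s, [/\ orthogonal A, S s & g = dsum A s]) /\
      (forall s, S s -> exists g, G g /\ eproj g = s),
      [/\ (forall t, T t -> G t),
          (forall t, T t -> S (eproj t) /\ (eproj t).1 = 1%:M),
          (forall t t', T t -> T t' -> eproj t = eproj t' -> t = t') &
          (forall b, S (1%:M, b) -> exists t, T t /\ eproj t = (1%:M, b))],
      [/\ (0 < m0)%N,
          (forall N, (0 < N)%N -> (normal_sub G (Tpow T N) <-> (m0 %| N)%N)) &
          (forall N, inM m0 N -> reps G (Tpow T N) (C N))] &
      (forall g h, G g -> G h -> act g x0 = act h x0 -> g = h) /\
      [/\ (daff <= d1 + d2)%N,
          affdim (aff (orbit G x0)) daff,
          (forall y, orbit G x0 y -> forall i : 'I_(d1 + d2), (i < d1 + d2 - daff)%N -> y i 0 = 0) &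
          (forall g, G g -> forall y : 'cV[R]_(d1 + d2),
              (forall i : 'I_(d1 + d2), (d1 + d2 - daff <= i)%N -> y i 0 = 0) ->
              rot g *m y = y)]].

Definition periodic n (G H : set (Eucl n)) (u : Eucl n -> 'cV[R]_n) : Prop :=
  forall g t, G g -> H t -> u (emul g t) = u g.

Definition U_per n (G T : set (Eucl n)) (m0 : nat) (u : Eucl n -> 'cV[R]_n) : Prop :=
  exists N, inM m0 N /\ periodic G (Tpow T N) u.

(* ---------- Property 1 and Property 2 (finite sets as duplicate-free lists) *)
Definition property1 n (G : set (Eucl n)) (x0 : 'cV[R]_n) (Rr : seq (Eucl n)) : Prop :=
  [/\ uniq Rr, (forall h, h \in Rr -> G h), eid n \in Rr &
      aff (seq_orbit Rr x0) = aff (orbit G x0)].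

Definition property2 n (G : set (Eucl n)) (x0 : 'cV[R]_n) (Rr : seq (Eucl n)) : Prop :=
  uniq Rr /\
  exists (R1 : set (Eucl n)) (R2 : seq (Eucl n)),
    [/\ R1 (eid n), (forall g, gen R1 g <-> G g), property1 G x0 R2 &
        forall g h, R1 g -> h \in R2 -> emul g h \in Rr].

Definition U_iso n (Rr : seq (Eucl n)) (x0 : 'cV[R]_n) (v : Eucl n -> 'cV[R]_n) : Prop :=
  exists (a : 'cV[R]_n) (Sk : 'M[R]_n), skew Sk /\
    forall h, h \in Rr -> rot h *m v h = a + Sk *m (act h x0 - x0).

Definition dist_iso n (Rr : seq (Eucl n)) (x0 : 'cV[R]_n) (w : Eucl n -> 'cV[R]_n) : R :=
  inf (fun r => exists v, U_iso Rr x0 v /\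
                 r = Num.sqrt (\sum_(h <- Rr) sqnorm (w h - v h))).

Definition seminorm n (Rr : seq (Eucl n)) (x0 : 'cV[R]_n) (CN : seq (Eucl n))
    (u : Eucl n -> 'cV[R]_n) : R :=
  Num.sqrt ((size CN)%:R^-1 *
            \sum_(g <- CN) dist_iso Rr x0 (fun h => u (emul g h)) ^+ 2).

Definition U_iso00 d1 d2 (G : set (Eucl (d1 + d2))) (x0 : 'cV[R]_(d1 + d2))
    (u : Eucl (d1 + d2) -> 'cV[R]_(d1 + d2)) : Prop :=
  exists (a : 'cV[R]_(d1 + d2)) (Sk : 'M[R]_d1), skew Sk /\
    forall g, G g -> rot g *m u g = a + block_mx Sk 0 0 (0 : 'M[R]_d2) *m (act g x0 - x0).

End Euclid.

From HB Require Import structures.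
From Pilot Require Import Defs.
From mathcomp Require Import all_boot all_order all_algebra.
From mathcomp Require Import boolp classical_sets reals.
From mathcomp Require Import lra.
Set Implicit Arguments. Unset Strict Implicit. Unset Printing Implicit Defensive.
Import Order.TTheory GRing.Theory Num.Theory.
Local Open Scope classical_set_scope.
Local Open Scope ring_scope.

(* If the seminorm vanishes, then for every representative c, hence (by periodicity and
   normality of T^N) for every g, the restriction of u(g .) to R lies in U_iso(R): this set
   is the image of a linear map on a finite-dimensional space, hence closed, so distance
   zero means membership.  Property 2 glues these local descriptions: for a generator r,
   the descriptions at g and at gr are affine in the point and agree on R''.x0, whose affine
   hull is that of G.x0, so one pair (a, S) describes u on all of G.  Along the powers
   t^(Nm) of a lattice translation t, u keeps the value u(id) by periodicity while t^(Nm).x0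
   moves by Nm (0, b); hence Nm S (0, b) stays bounded and S (0, b) = 0.  Skewness then
   forces S = S' (+) 0.  The converse is a direct computation. *)

Section EuclideanGroup.
Variables (R : realType) (n : nat).
Implicit Types (g h : Eucl R n).

Lemma orthogonalC (A : 'M[R]_n) : Defs.orthogonal A -> A *m A^T = 1%:M.
Proof. exact: mulmx1C. Qed.

Lemma emulA g h (k : Eucl R n) : emul (emul g h) k = emul g (emul h k).
Proof. by rewrite /emul /= mulmxA mulmxDr mulmxA addrA. Qed.

Lemma emul1g g : emul (eid R n) g = g.
Proof. by case: g => A b; rewrite /emul /= !mul1mx add0r. Qed.

Lemma emulg1 g : emul g (eid R n) = g.
Proof. by case: g => A b; rewrite /emul /= mulmx1 mulmx0 addr0. Qed.

Lemma emulVg g : isE g -> emul (einv g) g = eid R n.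
Proof. by case: g => A b; rewrite /isE /Defs.orthogonal /emul /eid /= => ->; rewrite addNr. Qed.

Lemma emulgV g : isE g -> emul g (einv g) = eid R n.
Proof.
case: g => A b; rewrite /isE /emul /eid /= => /orthogonalC AAt.
by rewrite AAt mulmxN mulmxA AAt mul1mx subrr.
Qed.

Lemma einvK g : isE g -> einv (einv g) = g.
Proof.
case: g => A b; rewrite /isE /einv /= => /orthogonalC AAt.
by rewrite trmxK mulmxN opprK mulmxA AAt mul1mx.
Qed.

Lemma actM g h x : act (emul g h) x = act g (act h x).
Proof. by rewrite /act /emul /= mulmxDr !mulmxA -addrA [_.2 + _]addrC. Qed.

Lemma act1 x : act (eid R n) x = x.
Proof. by rewrite /act /= mul1mx addr0. Qed.

Lemma epowD g a b : epow g (a + b) = emul (epow g a) (epow g b).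
Proof.
elim: b => [|b IH]; first by rewrite addn0 /= emulg1.
by rewrite addnS /= IH emulA.
Qed.

Lemma epow_translation g k : g.1 *m g.2 = g.2 -> (epow g k).2 = k%:R *: g.2.
Proof.
move=> fix_b; suff : (epow g k).1 *m g.2 = g.2 /\ (epow g k).2 = k%:R *: g.2 by case.
elim: k => [|k [IH1 IH2]]; first by rewrite /= mul1mx scale0r.
by rewrite /= -mulmxA fix_b IH1 IH2 mulrSr scalerDl scale1r.
Qed.

Section Subgroup.
Variable G : set (Eucl R n).
Hypothesis sG : subgroup G.

Lemma subgroup1 : G (eid R n). Proof. by case: sG. Qed.
Lemma subgroupM g h : G g -> G h -> G (emul g h). Proof. by case: sG => _ _ + _; apply. Qed.
Lemma subgroupV g : G g -> G (einv g). Proof. by case: sG => _ _ _; apply. Qed.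
Lemma subgroup_isE g : G g -> isE g. Proof. by case: sG => + _ _ _; apply. Qed.

Lemma subgroupX g k : G g -> G (epow g k).
Proof. by move=> Gg; elim: k => [|k IH] /=; [exact: subgroup1 | exact: subgroupM]. Qed.

End Subgroup.
End EuclideanGroup.

Lemma periodic_coset (R : realType) n (G TN : set (Eucl R n)) u c g h :
  subgroup G -> normal_sub G TN -> periodic G TN u ->
  G c -> G h -> TN (emul (einv c) g) -> u (emul g h) = u (emul c h).
Proof.
move=> sG [_ _ TNnormal] per Gc Gh TNcg; set t := emul (einv c) g in TNcg.
have cE := subgroup_isE sG Gc; have hE := subgroup_isE sG Gh.
have -> : g = emul c t by rewrite /t -emulA emulgV ?emul1g.
have TNt' : TN (emul (emul (einv h) t) h).
  by have := TNnormal _ _ (subgroupV sG Gh) TNcg; rewrite einvK.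
have -> : emul (emul c t) h = emul (emul c h) (emul (emul (einv h) t) h).
  by rewrite !emulA -[emul h (emul (einv h) _)]emulA emulgV ?emul1g.
by rewrite per //; exact: subgroupM.
Qed.

Lemma submx_of_approx (F : realFieldType) m p (w : 'rV[F]_m) (B : 'M[F]_(p, m)) :
  (forall eps, 0 < eps -> exists2 v : 'rV_m, (v <= B)%MS & forall i, `|(w - v) 0 i| <= eps) ->
  (w <= B)%MS.
Proof.
move=> approx; rewrite submxE; apply/eqP/rowP => l; rewrite [RHS]mxE.
set K := cokermx B; pose C := \sum_q `|K q l|.
have C0 : 0 <= C by apply: sumr_ge0.
suff : `|(w *m K) 0 l| <= 0 by rewrite normr_le0 => /eqP.
apply/ler_addgt0Pr => e e0; rewrite add0r.
have C1 : 0 < C + 1 by lra.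
have [|v /submxP [D ->] close] := approx (e / (C + 1)); first exact: divr_gt0.
have -> : (w *m K) 0 l = ((w - D *m B) *m K) 0 l.
  by rewrite mulmxBl -mulmxA mulmx_coker mulmx0 subr0.
rewrite mxE; apply: le_trans (ler_norm_sum _ _ _) _.
apply: (@le_trans _ _ (\sum_q e / (C + 1) * `|K q l|)).
  by apply: ler_sum => q _; rewrite normrM ler_wpM2r.
rewrite -mulr_sumr -/C mulrAC ler_pdivrMr // ler_wpM2l ?ltW //; lra.
Qed.

Section IsoDisplacements.
Variables (R : realType) (n : nat) (Rr : seq (Eucl R n)) (x0 : 'cV[R]_n).
Hypothesis RrE : {in Rr, forall h, isE h}.

(* [P = (a | M)] parametrizes, linearly, the translation [a] and the skew matrix [M - M^T]. *)
Definition iso_disp (P : 'M[R]_(n, 1 + n)) (h : Eucl R n) : 'cV[R]_n :=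
  (Defs.rot h)^T *m (lsubmx P + (rsubmx P - (rsubmx P)^T) *m (act h x0 - x0)).

Lemma iso_disp_linear h : linear (iso_disp ^~ h).
Proof.
move=> c P Q; rewrite /iso_disp !linearP /= [c *: rsubmx P + _ + _]addrACA -scalerDr.
by rewrite mulmxDl -scalemxAl addrACA -scalerDr linearP.
Qed.

Lemma Uiso_iso_dispP v :
  U_iso Rr x0 v <-> exists P, {in Rr, forall h, v h = iso_disp P h}.
Proof.
split=> [[a [Sk [skSk Hv]]]|[P HP]].
- exists (row_mx a (2^-1 *: Sk)) => h hR.
  have Sk_half : 2^-1 *: Sk - (2^-1 *: Sk)^T = Sk.
    by rewrite linearZ /= skSk scalerN opprK -scalerDl -[RHS]scale1r; congr (_ *: _); lra.
  rewrite /iso_disp row_mxKl row_mxKr Sk_half -Hv // mulmxA.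
  by have := RrE hR; rewrite /isE /Defs.orthogonal /Defs.rot => ->; rewrite mul1mx.
- exists (lsubmx P), (rsubmx P - (rsubmx P)^T); split.
    by rewrite /Defs.skew linearB /= trmxK opprB.
  by move=> h hR; rewrite HP // /iso_disp mulmxA orthogonalC ?mul1mx //; exact: RrE.
Qed.

Definition iso_mx (P : 'M[R]_(n, 1 + n)) : 'M[R]_(size Rr, n) :=
  \matrix_(j, i) iso_disp P (nth (eid R n) Rr j) i 0.

Fact iso_mx_is_linear : linear iso_mx.
Proof. by move=> c P Q; apply/matrixP => j i; rewrite [LHS]mxE iso_disp_linear !mxE. Qed.

HB.instance Definition _ := GRing.isLinear.Build R _ _ _ iso_mx iso_mx_is_linear.

Lemma sqnorm_ge0 (v : 'cV[R]_n) : 0 <= sqnorm v.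
Proof. by apply: sumr_ge0 => i _; exact: sqr_ge0. Qed.

Lemma sqr_entry_le_sqnorm (v : 'cV[R]_n) i : v i 0 ^+ 2 <= sqnorm v.
Proof. by rewrite /sqnorm (bigD1 i) //= lerDl sumr_ge0 // => j _; exact: sqr_ge0. Qed.

Lemma dist_iso_eq0 w : dist_iso Rr x0 w = 0 <-> U_iso Rr x0 w.
Proof.
pose E r := exists v, U_iso Rr x0 v /\ r = Num.sqrt (\sum_(h <- Rr) sqnorm (w h - v h)).
change (inf E = 0 <-> U_iso Rr x0 w).
have E_lb : lbound E 0 by move=> r [v [_ ->]]; exact: sqrtr_ge0.
have E_ne : E !=set0.
  exists (Num.sqrt (\sum_(h <- Rr) sqnorm (w h - 0))), (fun _ => 0); split => //.
  exists 0, 0; split; first by rewrite /Defs.skew trmx0 oppr0.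
  by move=> h _; rewrite mulmx0 mul0mx addr0.
split=> [dist0|Uw]; last first.
  have E0 : E 0.
    exists w; split => //; rewrite big1 ?sqrtr0 // => h _.
    by rewrite subrr /sqnorm big1 // => i _; rewrite mxE expr0n.
  have E_has_lb : has_lbound E by exists 0.
  by apply/le_anti/andP; split; [apply: (ge_inf E_has_lb) | apply: lb_le_inf].
pose Wm : 'M[R]_(size Rr, n) := \matrix_(j, i) w (nth (eid R n) Rr j) i 0.
have approx eps : 0 < eps -> exists P, forall j i, `|(Wm - iso_mx P) j i| <= eps.
  rewrite -dist0 => /(inf_lt E_ne) [_ [v [Uv ->]] close].
  have [P HP] := (Uiso_iso_dispP v).1 Uv; exists P => j i.
  set h := nth (eid R n) Rr j; have hR : h \in Rr by exact: mem_nth.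
  have -> : (Wm - iso_mx P) j i = (w h - v h) i 0 by rewrite HP // !mxE.
  rewrite -sqrtr_sqr; apply/ltW/(le_lt_trans _ close).
  rewrite ler_sqrt; last by apply: sumr_ge0 => h' _; exact: sqnorm_ge0.
  apply: le_trans (sqr_entry_le_sqnorm _ i) _.
  by rewrite (big_rem _ hR) /= lerDl sumr_ge0 // => h' _; exact: sqnorm_ge0.
have /submxP [D HD] : (mxvec Wm <= lin_mx iso_mx)%MS.
  apply: submx_of_approx => eps /approx [P HP].
  exists (mxvec (iso_mx P)); first by rewrite -mul_vec_lin submxMl.
  by case/mxvec_indexP => j i; move: (HP j i); rewrite -mxvecE linearB.
have WmE : Wm = iso_mx (vec_mx D).
  by apply: (can_inj mxvecK); rewrite HD -mul_vec_lin vec_mxK.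
apply/Uiso_iso_dispP; exists (vec_mx D) => h hR; apply/colP => i.
have hi : (index h Rr < size Rr)%N by rewrite index_mem.
by move: (congr1 (fun M : 'M_(size Rr, n) => M (Ordinal hi) i) WmE); rewrite !mxE /= nth_index.
Qed.

End IsoDisplacements.

Lemma seminorm_eq0P (R : realType) n (Rr CN : seq (Eucl R n)) x0 u : (0 < size CN)%N ->
  seminorm Rr x0 CN u = 0 <-> {in CN, forall c, dist_iso Rr x0 (fun h => u (emul c h)) = 0}.
Proof.
move=> CN0; rewrite /seminorm; split=> [/eqP|dist0].
  rewrite sqrtr_eq0 pmulr_rle0 ?invr_gt0 ?ltr0n // => sum_le0 c cC.
  have : \sum_(g <- CN) dist_iso Rr x0 (fun h => u (emul g h)) ^+ 2 == 0.
    by rewrite eq_le sum_le0 sumr_ge0 // => g _; exact: sqr_ge0.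
  rewrite psumr_eq0 => [/allP/(_ c cC)|g _]; last exact: sqr_ge0.
  by rewrite /= sqrf_eq0 => /eqP.
by rewrite big_seq big1 ?mulr0 ?sqrtr0 // => c /dist0 ->; rewrite expr0n.
Qed.

Section AffineHull.
Variables (R : realType) (n : nat).

Definition affine_fun (f : 'cV[R]_n -> 'cV[R]_n) :=
  exists c (M : 'M[R]_n), forall y, f y = c + M *m y.

Lemma affine_fun_transport (X M : 'M[R]_n) (c x0 : 'cV[R]_n) (q : Eucl R n) :
  affine_fun (fun y => X *m (c + M *m (act q y - x0))).
Proof.
exists (X *m (c + M *m (q.2 - x0))), (X *m M *m q.1) => y.
have -> : act q y - x0 = q.1 *m y + (q.2 - x0) by rewrite /act addrA.
by rewrite [M *m _]mulmxDr addrCA addrC mulmxDr !mulmxA.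
Qed.

Lemma aff_sub (X : set 'cV[R]_n) y : X y -> aff X y.
Proof.
by move=> Xy; exists 1%N, (fun=> y), (fun=> 1); split; rewrite ?big_ord1 ?scale1r.
Qed.

Lemma affine_fun_eq_aff f1 f2 (X : set 'cV[R]_n) : affine_fun f1 -> affine_fun f2 ->
  (forall y, X y -> f1 y = f2 y) -> forall y, aff X y -> f1 y = f2 y.
Proof.
move=> [c1 [M1 f1E]] [c2 [M2 f2E]] eqX _ [k [p [l [Xp l1 ->]]]].
have affine_comb c M : c + M *m (\sum_i l i *: p i) = \sum_i l i *: (c + M *m p i).
  have c_comb : \sum_i l i *: c = c by rewrite -scaler_suml l1 scale1r.
  rewrite -{1}c_comb mulmx_sumr -big_split /=.
  by apply: eq_bigr => i _; rewrite scalerDr scalemxAr.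
by rewrite f1E f2E !affine_comb; apply: eq_bigr => i _; rewrite -f1E -f2E eqX.
Qed.

Lemma transport_eq_orbit (G : set (Eucl R n)) (R2 : seq (Eucl R n)) (x0 : 'cV[R]_n)
    (X1 X2 M1 M2 : 'M[R]_n) (c1 c2 : 'cV[R]_n) (q1 q2 : Eucl R n) :
  aff (seq_orbit R2 x0) = aff (Defs.orbit G x0) ->
  {in R2, forall h, X1 *m (c1 + M1 *m (act q1 (act h x0) - x0)) =
                    X2 *m (c2 + M2 *m (act q2 (act h x0) - x0))} ->
  forall g, G g -> X1 *m (c1 + M1 *m (act q1 (act g x0) - x0)) =
                   X2 *m (c2 + M2 *m (act q2 (act g x0) - x0)).
Proof.
move=> affR2 eqR2 g Gg.
apply: (affine_fun_eq_aff (affine_fun_transport _ _ _ _ _) (affine_fun_transport _ _ _ _ _)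
  (X := seq_orbit R2 x0)); first by move=> _ [h [hR2 ->]]; exact: eqR2.
by rewrite affR2; apply: aff_sub; exists g.
Qed.

End AffineHull.

Section Gluing.
Variables (R : realType) (n : nat) (G R1 : set (Eucl R n)) (Rr R2 : seq (Eucl R n))
  (x0 : 'cV[R]_n) (u : Eucl R n -> 'cV[R]_n).
Hypotheses (sG : subgroup G) (genG : forall g, gen R1 g <-> G g) (R1id : R1 (eid R n))
  (R2id : eid R n \in R2) (R2G : {in R2, forall h, G h})
  (affR2 : aff (seq_orbit R2 x0) = aff (Defs.orbit G x0))
  (R1R2 : forall r h, R1 r -> h \in R2 -> emul r h \in Rr)
  (local : forall g, G g -> U_iso Rr x0 (fun h => u (emul g h))).

Definition local_iso g a (S : 'M[R]_n) :=
  {in Rr, forall h, Defs.rot h *m u (emul g h) = a + S *m (act h x0 - x0)}.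

Lemma R1G r : R1 r -> G r. Proof. by move=> r1; apply/genG/gen_in. Qed.

Lemma R2_Rr h : h \in R2 -> h \in Rr.
Proof. by move=> hR2; rewrite -(emul1g h); exact: R1R2. Qed.

Section IdentityForm.
Variables (a : 'cV[R]_n) (S : 'M[R]_n).
Hypothesis local1 : local_iso (eid R n) a S.

Definition compatible g := exists a' S', local_iso g a' S' /\
  forall h, G h -> Defs.rot g *m (a' + S' *m (act h x0 - x0)) = a + S *m (act g (act h x0) - x0).

Lemma compatible_right g r : G g -> R1 r -> compatible g -> compatible (emul g r).
Proof.
move=> Gg r1 [a' [S' [loc_g transp]]].
have Ggr : G (emul g r) by apply: subgroupM => //; exact: R1G.
have [a'' [S'' [_ loc_gr]]] := local Ggr.
exists a'', S''; split => // h Gh.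
rewrite -[in LHS](act1 (act h x0)) -[RHS]mul1mx.
apply: (transport_eq_orbit affR2 _ Gh) => h' hR2.
rewrite act1 mul1mx -loc_gr ?R2_Rr //.
have -> : Defs.rot (emul g r) *m (Defs.rot h' *m u (emul (emul g r) h')) =
          Defs.rot g *m (Defs.rot (emul r h') *m u (emul g (emul r h'))).
  by rewrite emulA /Defs.rot /= !mulmxA.
rewrite loc_g; last exact: R1R2.
by rewrite transp ?actM //; apply: subgroupM => //; [exact: R1G | exact: R2G].
Qed.

Lemma compatible_left g r : G g -> R1 r -> compatible (emul g r) -> compatible g.
Proof.
move=> Gg r1 [a'' [S'' [loc_gr transp]]].
have Gr := R1G r1; have rE := subgroup_isE sG Gr.
have [a' [S' [_ loc_g]]] := local Gg.
exists a', S'; split => // h Gh.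
have Grh : G (emul (einv r) h) by apply: subgroupM => //; exact: subgroupV.
have -> : act h x0 = act r (act (emul (einv r) h) x0).
  by rewrite -actM -emulA emulgV // emul1g.
rewrite -[in RHS](actM g r) -[RHS]mul1mx.
apply: (transport_eq_orbit affR2 _ Grh) => h' hR2.
rewrite mul1mx -actM -loc_g; last exact: R1R2.
have -> : Defs.rot g *m (Defs.rot (emul r h') *m u (emul g (emul r h'))) =
          Defs.rot (emul g r) *m (Defs.rot h' *m u (emul (emul g r) h')).
  by rewrite emulA /Defs.rot /= !mulmxA.
by rewrite loc_gr ?R2_Rr // transp //; exact: R2G.
Qed.

Lemma compatible_all g : G g -> compatible g.
Proof.
have comp1 : compatible (eid R n).
  by exists a, S; split => // h _; rewrite /Defs.rot /= mul1mx act1.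
suff step x : gen R1 x -> forall g, G g -> compatible g <-> compatible (emul g x).
  by move=> Gg; have := step g (proj2 (genG g) Gg) _ (subgroup1 sG); rewrite emul1g => <-.
elim=> {x} [|r r1|x y gx IHx gy IHy|x gx IHx] g' Gg'.
- by rewrite emulg1.
- by split; [exact: compatible_right | exact: compatible_left].
- have Gx : G x by apply/genG.
  by rewrite -emulA; apply: (iff_trans (IHx g' Gg')); apply: IHy; exact: subgroupM.
- have Gx : G x by apply/genG.
  have Gg'x : G (emul g' (einv x)) by apply: subgroupM => //; exact: subgroupV.
  have xE := subgroup_isE sG Gx.
  by apply: iff_sym; have := IHx _ Gg'x; rewrite emulA emulVg // emulg1.
Qed.

End IdentityForm.

Lemma glue_local_isos : exists a S, Defs.skew S /\
  forall g, G g -> Defs.rot g *m u g = a + S *m (act g x0 - x0).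
Proof.
have [a [S [skS loc1]]] := local (subgroup1 sG).
exists a, S; split => // g Gg.
have [a' [S' [loc_g transp]]] := compatible_all loc1 Gg.
have := loc_g _ (R2_Rr R2id); rewrite emulg1 act1 subrr mulmx0 addr0 /Defs.rot /= mul1mx.
by move=> ->; have := transp _ (subgroup1 sG); rewrite act1 subrr mulmx0 addr0.
Qed.

End Gluing.

Lemma nat_multiples_bounded_eq0 (F : archiRealFieldType) (z C : F) :
  (forall m : nat, `|m%:R * z| <= C) -> z = 0.
Proof.
move=> bounded; apply/eqP; apply: contraT => z_neq0.
have z_gt0 : 0 < `|z| by rewrite normr_gt0.
have C_ge0 : 0 <= C by apply: le_trans (bounded 0%N); exact: normr_ge0.
have := archi_boundP (divr_ge0 C_ge0 (ltW z_gt0)).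
have := bounded (Num.bound (C / `|z|)); rewrite normrM normr_nat -(ler_pdivlMr _ _ z_gt0).
by move=> /le_lt_trans lt /lt; rewrite ltxx.
Qed.

Lemma mulmx_entry_le (F : numDomainType) m p (M : 'M[F]_(m, p)) (v : 'cV[F]_p) i :
  `|(M *m v) i 0| <= \sum_j `|M i j| * `|v j 0|.
Proof.
rewrite mxE; apply: le_trans (ler_norm_sum _ _ _) _.
by apply: ler_sum => j _; rewrite normrM.
Qed.

Section OrthogonalBounds.
Variables (R : realType) (n : nat) (Q : 'M[R]_n).
Hypothesis oQ : Defs.orthogonal Q.

Lemma orthogonal_entry_le1 i j : `|Q i j| <= 1.
Proof.
have col_norm1 : \sum_l Q l j ^+ 2 = 1.
  have id_jj : (1%:M : 'M[R]_n) j j = 1 by rewrite mxE eqxx.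
  by rewrite -id_jj -oQ mxE; apply: eq_bigr => l _; rewrite mxE expr2.
rewrite -sqrtr_sqr -sqrtr1 ler_sqrt // -col_norm1.
by rewrite (bigD1 i) //= lerDl sumr_ge0 // => l _; exact: sqr_ge0.
Qed.

Lemma orthogonal_mulmx_entry_le (v : 'cV[R]_n) i : `|(Q *m v) i 0| <= \sum_j `|v j 0|.
Proof.
apply: le_trans (mulmx_entry_le _ _ _) _.
by apply: ler_sum => j _; apply: ler_piMl => //; exact: orthogonal_entry_le1.
Qed.

Lemma orthogonal_displacement_entry_le (S : 'M[R]_n) (a x0 : 'cV[R]_n) i :
  `|(Q *m a - a - S *m (Q *m x0) + S *m x0) i 0| <=
    \sum_j `|a j 0| + `|a i 0| + \sum_l `|S i l| * \sum_j `|x0 j 0| + `|(S *m x0) i 0|.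
Proof.
have -> : (Q *m a - a - S *m (Q *m x0) + S *m x0) i 0 =
          (Q *m a) i 0 - a i 0 - (S *m (Q *m x0)) i 0 + (S *m x0) i 0 by rewrite !mxE.
apply: le_trans (ler_normD _ _) _; rewrite lerD2r.
apply: le_trans (ler_normB _ _) _; apply: lerD.
  apply: le_trans (ler_normB _ _) _; apply: lerD => //; exact: orthogonal_mulmx_entry_le.
apply: le_trans (mulmx_entry_le _ _ _) _; apply: ler_sum => l _.
by apply: ler_wpM2l => //; exact: orthogonal_mulmx_entry_le.
Qed.

End OrthogonalBounds.

Section Translations.
Variables (R : realType) (d1 d2 : nat) (Ssp : set (Eucl R d2)) (G T : set (Eucl R (d1 + d2)))
  (N : nat) (u : Eucl R (d1 + d2) -> 'cV[R]_(d1 + d2)) (x0 a : 'cV[R]_(d1 + d2))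
  (S : 'M[R]_(d1 + d2)).
Hypotheses (sG : subgroup G) (N0 : (0 < N)%N)
  (Gform : forall g, G g -> exists A s, [/\ Defs.orthogonal A, Ssp s & g = dsum A s])
  (TG : forall t, T t -> G t)
  (Tonto : forall b, Ssp (1%:M, b) -> exists t, T t /\ eproj t = (1%:M, b))
  (per : periodic G (Tpow T N) u)
  (global : forall g, G g -> Defs.rot g *m u g = a + S *m (act g x0 - x0)).

Lemma global_iso_kills_translation b : Ssp (1%:M, b) -> S *m col_mx 0 b = 0.
Proof.
move=> Sb; have [t [Tt tb]] := Tonto Sb; have Gt := TG Tt.
have [A [s [_ _ ts]]] := Gform Gt.
have sb : s = (1%:M, b) by rewrite -tb ts /eproj /dsum /= block_mxKdr col_mxKd; case: s {ts tb}.
set e : 'cV[R]_(d1 + d2) := col_mx 0 b.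
have [te t2] : t.1 *m e = e /\ t.2 = e.
  by rewrite ts sb /dsum /= mul_block_col !mulmx0 !mul0mx mul1mx !add0r.
have u1 : u (eid R _) = a.
  by have := global (subgroup1 sG); rewrite act1 subrr mulmx0 addr0 /Defs.rot /= mul1mx.
have u_tpow m : u (epow t (N * m)) = a.
  elim: m => [|m IH]; first by rewrite muln0.
  by rewrite mulnSr epowD per //; [exact: subgroupX | exists t].
have multiple m : (N * m)%:R *: (S *m e) =
    (epow t (N * m)).1 *m a - a - S *m ((epow t (N * m)).1 *m x0) + S *m x0.
  have := global (subgroupX sG (N * m) Gt).
  rewrite u_tpow /act (epow_translation _ (_ : t.1 *m t.2 = t.2)) ?t2 ?te // => ->.
  rewrite [a + _]addrC addrK mulmxBr mulmxDr addrAC subrK [S *m _ + _]addrC addrK.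
  by rewrite scalemxAr.
apply/colP => i; rewrite [RHS]mxE.
suff : N%:R * (S *m e) i 0 = 0 by move/eqP; rewrite mulf_eq0 pnatr_eq0 gtn_eqF //= => /eqP.
apply: nat_multiples_bounded_eq0 => m.
have oQ : Defs.orthogonal (epow t (N * m)).1 := subgroup_isE sG (subgroupX sG (N * m) Gt).
have -> : m%:R * (N%:R * (S *m e) i 0) = ((N * m)%:R *: (S *m e)) i 0.
  by rewrite !mxE natrM mulrCA mulrA.
by rewrite multiple; apply: orthogonal_displacement_entry_le.
Qed.

Lemma global_iso_block (V : 'M[R]_d2) : V \in unitmx ->
  (forall b : 'cV[R]_d2, Ssp (1%:M, b) <->
     exists z : 'cV[int]_d2, b = V *m map_mx (fun k : int => k%:~R) z) ->
  Defs.skew S -> S = block_mx (ulsubmx S) 0 0 0 /\ Defs.skew (ulsubmx S).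
Proof.
move=> Vu HV skS.
have SV0 : S *m col_mx 0 V = 0.
  apply/matrixP => i j; rewrite [RHS]mxE.
  have /global_iso_kills_translation SVj : Ssp (1%:M, V *m delta_mx j 0).
    apply/HV; exists (delta_mx j 0); congr (_ *m _); apply/matrixP => p q.
    by rewrite !mxE; case: (_ && _).
  have -> : (S *m col_mx 0 V) i j = col j (S *m col_mx 0 V) i 0 by rewrite [RHS]mxE.
  by rewrite colE -mulmxA mul_col_mx mul0mx SVj mxE.
have SI0 : S *m col_mx 0 1%:M = 0.
  have -> : col_mx (0 : 'M[R]_(d1, d2)) 1%:M = col_mx 0 V *m invmx V.
    by rewrite mul_col_mx mul0mx mulmxV.
  by rewrite mulmxA SV0 mul0mx.
move: SI0 skS; rewrite -[S]submxK mul_block_col !mulmx0 !mulmx1 !add0r -col_mx0.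
case/eq_col_mx => -> ->.
rewrite /Defs.skew tr_block_mx opp_block_mx trmx0 oppr0.
case/eq_block_mx => skew_ul _ dl0 _.
rewrite block_mxKul; split => //.
by move/eqP: dl0; rewrite eq_sym oppr_eq0 => /eqP ->.
Qed.

End Translations.

Lemma Uiso_shift_of_global_iso (R : realType) n (G : set (Eucl R n))
    (Rr : seq (Eucl R n)) x0 u a (S : 'M[R]_n) c :
  subgroup G -> {in Rr, forall h, G h} -> Defs.skew S ->
  (forall g, G g -> Defs.rot g *m u g = a + S *m (act g x0 - x0)) ->
  G c -> U_iso Rr x0 (fun h => u (emul c h)).
Proof.
move=> sG RrG skS Hu Gc; set A := Defs.rot c.
have AtA : A^T *m A = 1%:M := subgroup_isE sG Gc.
exists (A^T *m (a + S *m (act c x0 - x0))), (A^T *m S *m A); split.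
  by rewrite /Defs.skew !trmx_mul trmxK skS mulNmx mulmxN mulmxA.
move=> h hR.
have -> : Defs.rot h *m u (emul c h) = A^T *m (Defs.rot (emul c h) *m u (emul c h)).
  by rewrite /Defs.rot /= !mulmxA AtA mul1mx.
rewrite Hu; last by apply: subgroupM => //; exact: RrG.
have -> : act (emul c h) x0 - x0 = A *m (act h x0 - x0) + (act c x0 - x0).
  by rewrite actM /act /A /Defs.rot mulmxBr !addrA addrNK.
by rewrite !mulmxDr !mulmxA addrA addrAC.
Qed.

Unset Implicit Arguments.

Theorem theorem3p27 (R : realType) (d1 d2 : nat) (S : set (Eucl R d2))
    (G T : set (Eucl R (d1 + d2))) (m0 : nat) (C : nat -> seq (Eucl R (d1 + d2)))
    (x0 : 'cV[R]_(d1 + d2)) (daff : nat) :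
  standing_setting S G T m0 C x0 daff ->
  forall Rr : seq (Eucl R (d1 + d2)),
    (forall h, h \in Rr -> G h) ->
    property2 G x0 Rr ->
    forall (u : Eucl R (d1 + d2) -> 'cV[R]_(d1 + d2)) (N : nat),
      inM m0 N -> periodic G (Tpow T N) u ->
      (seminorm Rr x0 (C N) u = 0 <-> U_iso00 G x0 u).
Proof.
move=> [[[_ _ [V [Vu HV]]] sG _] [Gform _] [TG _ _ Tonto] [_ normalN repsN] _].
move=> Rr RrG [_ [R1 [R2 [R1id genG [_ R2G R2id affR2] R1R2]]]] u N [N0 m0N] per.
have nTN : normal_sub G (Tpow T N) by apply/normalN.
have [_ CG Crep] := repsN N (conj N0 m0N).
have RrE : {in Rr, forall h, isE h} by move=> h /RrG /(subgroup_isE sG).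
have CN0 : (0 < size (C N))%N by have [c [+ _ _]] := Crep _ (subgroup1 sG); case: (C N).
split=> [/(seminorm_eq0P _ _ _ CN0) dist0 | [a [Sk [skSk Hu]]]].
- have local g : G g -> U_iso Rr x0 (fun h => u (emul g h)).
    move=> Gg; have [c [cC Tcg _]] := Crep _ Gg.
    have [a [S' [skS' Hc]]] := (dist_iso_eq0 x0 RrE _).1 (dist0 c cC).
    exists a, S'; split => // h hR.
    by rewrite (periodic_coset sG nTN per (CG c cC) (RrG h hR) Tcg) Hc.
  have [a [S' [skS' Hu]]] := glue_local_isos sG genG R1id R2id R2G affR2 R1R2 local.
  have [S'E skS'ul] := global_iso_block sG N0 Gform TG Tonto per Hu Vu HV skS'.
  by exists a, (ulsubmx S'); split => // g Gg; rewrite -S'E; exact: Hu.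
- apply/(seminorm_eq0P _ _ _ CN0) => c cC; apply/(dist_iso_eq0 x0 RrE).
  apply: (Uiso_shift_of_global_iso sG RrG _ Hu (CG c cC)).
  by rewrite /Defs.skew tr_block_mx !trmx0 skSk opp_block_mx !oppr0.
Qed.
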